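(* Suppose Assumption 5 holds. Fix $\sigma,\tilde\sigma\in\Delta X$ and for $\beta\in[0,1]$ let $\sigma_\beta=\beta\sigma+(1-\beta)\tilde\sigma$. Then: (i) if $\theta(\sigma)=\theta(\tilde\sigma)$, then $\theta(\sigma_\beta)=\theta(\sigma)$ for all $\beta\in[0,1]$; (ii) if $\theta(\tilde\sigma)<\theta(\sigma)$, then $\beta\mapsto\theta(\sigma_\beta)$ is weakly increasing on $[0,1]$; (iii) if $\theta(\tilde\sigma)<\theta(\sigma)$, then $\theta(\sigma_{\beta_1})<\theta(\sigma_{\beta_2})$ for all $\beta_1<\beta_2$ in $[0,1]$ with $\theta(\sigma_{\beta_1})\in(0,1)$.
   Context: Setting. $X$ is a finite set of actions, $Y$ a set of consequences, $Q:X\to\Delta Y$ the true consequence function, and $\{Q_\theta:\theta\in\Theta\}$ the agent's models with $\Theta=[0,1]$. Assumptions 1–2 hold: $Y$ is a compact subset of a Euclidean space; there is a Borel probability measure $\nu$ on $Y$ with $Q(\cdot\mid x),Q_\theta(\cdot\mid x)\ll\nu$, densities $q(\cdot\mid x)$, $q_\theta(\cdot\mid x)$; $\theta\mapsto q_\theta(\cdot\mid x)$ is continuous $Q(\cdot\mid x)$-a.s.; and for each $x$ there is $g_x\in L^2(Y,Q(\cdot\mid x))$ with $|\ln(q(y\mid x)/q_\theta(y\mid x))|\le g_x(y)$ for all $\theta$, $Q(\cdot\mid x)$-a.s. KLD: for $\sigma\in\Delta X$ (distributions on $X$), $K(\theta,\sigma)=\sum_x\sigma(x)\int\ln\frac{q(y\mid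 x)}{q_\theta(y\mid x)}q(y\mid x)\nu(dy)$. Assumption 5 (identifiability): (i) for each $\sigma\in\Delta X$, $\theta\mapsto K(\theta,\sigma)$ has a unique minimizer on $[0,1]$, denoted $\theta(\sigma)$; (ii) for each $\sigma$ with $\theta(\sigma)\in(0,1)$, $K(\cdot,\sigma)$ is twice differentiable at $\theta(\sigma)$ and $\frac{\partial^2K(\theta,\sigma)}{\partial\theta^2}\big|_{\theta=\theta(\sigma)}>0$. *)

From Stdlib Require Import Reals.
Open Scope R_scope.

(* Actions X = {0,...,n-1}; a distribution sigma on X is a function nat -> R
   (only its values on 0..n-1 matter). *)
Fixpoint sumR (n : nat) (f : nat -> R) : R :=
  match n with
  | O => 0
  | S m => sumR m f + f m
  end.

Definition DeltaX (n : nat) (sigma : nat -> R) : Prop :=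
  (forall x, (x < n)%nat -> 0 <= sigma x) /\ sumR n sigma = 1.

(* k x theta := int ln(q(y|x)/q_theta(y|x)) q(y|x) nu(dy), the per-action KLD.
   K(theta, sigma) = sum_x sigma(x) k x theta. *)
Definition KLD (n : nat) (k : nat -> R -> R) (theta : R) (sigma : nat -> R) : R :=
  sumR n (fun x => sigma x * k x theta).

Definition cont_on_01 (f : R -> R) : Prop :=
  forall t, 0 <= t <= 1 -> forall eps, 0 < eps ->
    exists delta, 0 < delta /\
      forall s, 0 <= s <= 1 -> Rabs (s - t) < delta -> Rabs (f s - f t) < eps.

Definition twice_diff_at (f : R -> R) (t0 c : R) : Prop :=
  exists (d : R -> R) (delta : R), 0 < delta /\
    (forall t, Rabs (t - t0) < delta -> derivable_pt_lim f t (d t)) /\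
    derivable_pt_lim d t0 c.

Definition Assumption5 (n : nat) (k : nat -> R -> R) (th : (nat -> R) -> R) : Prop :=
  forall sigma, DeltaX n sigma ->
    (0 <= th sigma <= 1 /\
     forall t, 0 <= t <= 1 -> t <> th sigma ->
       KLD n k (th sigma) sigma < KLD n k t sigma) /\
    (0 < th sigma < 1 ->
       exists c, 0 < c /\ twice_diff_at (fun t => KLD n k t sigma) (th sigma) c).

Definition mix (beta : R) (sigma sigmat : nat -> R) : nat -> R :=
  fun x => beta * sigma x + (1 - beta) * sigmat x.

From Stdlib Require Import Reals Lra Lia Classical ClassicalDescription FunctionalExtensionality.
Open Scope R_scope.

(* Write f(beta) = theta(sigma_beta) and K_beta = K(., sigma_beta), which is affine in beta.
   (i)  A common strict minimizer of K_0 and K_1 is a strict minimizer of every K_beta.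
        Applied to two points of the segment, this makes f "flat between" points where
        it takes equal values.
   (ii) f is continuous (a Berge-type argument: K_beta moves uniformly by O(|beta - beta0|)
        while the minimum of K_beta0 on the compact [0,1] is well separated). A continuous
        function that is flat between equal values has no strict interior extremum (IVT),
        hence is monotone, nondecreasing since f(0) < f(1).
   (iii) If f(b1) = f(b2) = t with t interior, then by the second-order condition of
        Assumption 5 the level set {beta | f(beta) = t} is open, and by continuity it is
        closed; connectedness of [0,1] then forces f(0) = f(1), a contradiction. *)

(* Functions on [0,1] are studied through their extension t |-> h (clamp01 t) to R,
   which is continuous exactly when h is continuous on [0,1]. *)
Definition clamp01 (t : R) : R := Rmax 0 (Rmin 1 t).

Lemma clamp01_range (t : R) : 0 <= clamp01 t <= 1.
Proof. unfold clamp01, Rmax, Rmin; repeat destruct Rle_dec; lra. Qed.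

Lemma clamp01_id (t : R) : 0 <= t <= 1 -> clamp01 t = t.
Proof. unfold clamp01, Rmax, Rmin; repeat destruct Rle_dec; lra. Qed.

Lemma clamp01_contract (s t : R) : Rabs (clamp01 s - clamp01 t) <= Rabs (s - t).
Proof.
  unfold clamp01, Rmax, Rmin, Rabs; repeat destruct Rle_dec; repeat destruct Rcase_abs; lra.
Qed.

Lemma cont01_iff (h : R -> R) : cont_on_01 h <-> continuity (fun t => h (clamp01 t)).
Proof.
  split.
  - intros Hh x eps Heps.
    destruct (Hh (clamp01 x) (clamp01_range x) eps Heps) as [d [Hd Hball]].
    exists d; split; [exact Hd|]. intros y [_ Hy].
    apply Hball; [apply clamp01_range|].
    eapply Rle_lt_trans; [apply clamp01_contract | exact Hy].
  - intros Hc t Ht eps Heps.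
    destruct (Hc t eps Heps) as [d [Hd Hball]].
    exists d; split; [exact Hd|]. intros s Hs Hst.
    destruct (Req_dec s t) as [->|Hne].
    + unfold Rminus; rewrite Rplus_opp_r, Rabs_R0; exact Heps.
    + specialize (Hball s (conj (conj I (not_eq_sym Hne)) Hst)). simpl in Hball.
      unfold Rdist in Hball. rewrite !clamp01_id in Hball by assumption. exact Hball.
Qed.

Lemma cont01_const (c : R) : cont_on_01 (fun _ => c).
Proof. apply cont01_iff, continuity_const. intros ? ?; reflexivity. Qed.

Lemma cont01_id : cont_on_01 (fun t => t).
Proof. intros t _ eps Heps. exists eps; split; [exact Heps|]. intros s _ Hs; exact Hs. Qed.

Lemma cont01_plus (f g : R -> R) :
  cont_on_01 f -> cont_on_01 g -> cont_on_01 (fun t => f t + g t).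
Proof.
  rewrite !cont01_iff. intros Hf Hg.
  exact (continuity_plus (fun t => f (clamp01 t)) (fun t => g (clamp01 t)) Hf Hg).
Qed.

Lemma cont01_minus (f g : R -> R) :
  cont_on_01 f -> cont_on_01 g -> cont_on_01 (fun t => f t - g t).
Proof.
  rewrite !cont01_iff. intros Hf Hg.
  exact (continuity_minus (fun t => f (clamp01 t)) (fun t => g (clamp01 t)) Hf Hg).
Qed.

Lemma cont01_opp (f : R -> R) : cont_on_01 f -> cont_on_01 (fun t => - f t).
Proof.
  rewrite !cont01_iff. intros Hf.
  exact (continuity_opp (fun t => f (clamp01 t)) Hf).
Qed.

Lemma cont01_scal (c : R) (f : R -> R) : cont_on_01 f -> cont_on_01 (fun t => c * f t).
Proof.
  rewrite !cont01_iff. intros Hf.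
  exact (continuity_scal (fun t => f (clamp01 t)) c Hf).
Qed.

Lemma cont01_abs (f : R -> R) : cont_on_01 f -> cont_on_01 (fun t => Rabs (f t)).
Proof.
  rewrite !cont01_iff. intros Hf.
  exact (continuity_comp (fun t => f (clamp01 t)) Rabs Hf Rcontinuity_abs).
Qed.

Lemma Rmax_dist (a b c d : R) : Rabs (Rmax a b - Rmax c d) <= Rmax (Rabs (a - c)) (Rabs (b - d)).
Proof. unfold Rmax, Rabs; repeat destruct Rle_dec; repeat destruct Rcase_abs; lra. Qed.

Lemma cont01_max (f g : R -> R) :
  cont_on_01 f -> cont_on_01 g -> cont_on_01 (fun t => Rmax (f t) (g t)).
Proof.
  intros Hf Hg t Ht eps Heps.
  destruct (Hf t Ht eps Heps) as [df [Hdf Bf]].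
  destruct (Hg t Ht eps Heps) as [dg [Hdg Bg]].
  exists (Rmin df dg); split; [apply Rmin_glb_lt; assumption|].
  intros s Hs Hst.
  eapply Rle_lt_trans; [apply Rmax_dist|]. apply Rmax_lub_lt.
  - apply Bf; [exact Hs|]. eapply Rlt_le_trans; [exact Hst | apply Rmin_l].
  - apply Bg; [exact Hs|]. eapply Rlt_le_trans; [exact Hst | apply Rmin_r].
Qed.

Lemma cont01_min_attained (h : R -> R) :
  cont_on_01 h -> exists u0, 0 <= u0 <= 1 /\ forall u, 0 <= u <= 1 -> h u0 <= h u.
Proof.
  rewrite cont01_iff. intros Hc.
  destruct (continuity_ab_min _ 0 1 ltac:(lra) (fun c _ => Hc c)) as [u0 [Hmin Hu0]].
  exists u0; split; [exact Hu0|]. intros u Hu.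
  specialize (Hmin u Hu). rewrite !clamp01_id in Hmin by assumption. exact Hmin.
Qed.

Lemma cont01_bounded (h : R -> R) :
  cont_on_01 h -> exists M, 0 <= M /\ forall u, 0 <= u <= 1 -> Rabs (h u) <= M.
Proof.
  intros Hc. destruct (cont01_min_attained (fun u => - Rabs (h u))) as [u0 [_ Hmin]].
  - apply cont01_opp, cont01_abs, Hc.
  - exists (Rabs (h u0)); split; [apply Rabs_pos|]. intros u Hu. specialize (Hmin u Hu). lra.
Qed.

Lemma cont01_ivt (F : R -> R) (a b v : R) :
  cont_on_01 F -> 0 <= a -> a < b -> b <= 1 -> (F a - v) * (F b - v) < 0 ->
  exists c, a < c < b /\ F c = v.
Proof.
  rewrite cont01_iff. intros Hc Ha Hab Hb Hv.
  assert (Hcv : continuity (fun t => F (clamp01 t) - v)).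
  { exact (continuity_minus _ (fun _ => v) Hc (continuity_const (fun _ => v) (fun _ _ => eq_refl))). }
  destruct (IVT_cor _ a b Hcv ltac:(lra)) as [c [Hcab Hzero]].
  - rewrite !clamp01_id by lra. lra.
  - rewrite clamp01_id in Hzero by lra.
    exists c; split; [|lra].
    destruct (Req_dec c a) as [->|]; [nra|]. destruct (Req_dec c b) as [->|]; [nra|]. lra.
Qed.

Definition locally_const01 (P : R -> Prop) : Prop :=
  forall b, 0 <= b <= 1 -> exists eta, 0 < eta /\
    forall b', 0 <= b' <= 1 -> Rabs (b' - b) < eta -> (P b' <-> P b).

(* Connectedness of [0,1]: a locally constant predicate holding somewhere holds
   everywhere. Its indicator would be continuous and would skip the value 1/2. *)
Lemma locally_const01_everywhere (P : R -> Prop) (b0 : R) :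
  locally_const01 P -> 0 <= b0 <= 1 -> P b0 -> forall b, 0 <= b <= 1 -> P b.
Proof.
  intros Hloc Hb0 HP0 b Hb.
  set (ind := fun x => if excluded_middle_informative (P x) then 1 else 0).
  assert (Hind : cont_on_01 ind).
  { intros t Ht eps Heps. destruct (Hloc t Ht) as [eta [Heta Hiff]].
    exists eta; split; [exact Heta|]. intros s Hs Hst.
    unfold ind; destruct (excluded_middle_informative (P s)) as [Ps|nPs];
      destruct (excluded_middle_informative (P t)) as [Pt|nPt];
      [| exfalso; apply nPt, (Hiff s Hs Hst), Ps | exfalso; apply nPs, (Hiff s Hs Hst), Pt |];
      unfold Rminus; rewrite Rplus_opp_r, Rabs_R0; exact Heps. }
  assert (Hind0 : ind b0 = 1).
  { unfold ind; destruct (excluded_middle_informative (P b0)); [reflexivity | contradiction]. }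
  apply NNPP; intros HnP.
  assert (Hindb : ind b = 0).
  { unfold ind; destruct (excluded_middle_informative (P b)); [contradiction | reflexivity]. }
  assert (Hskip : forall c, ind c <> 1 / 2).
  { intros c. unfold ind; destruct (excluded_middle_informative (P c)); lra. }
  destruct (Rlt_le_dec b0 b) as [Hlt|Hle].
  - destruct (cont01_ivt ind b0 b (1 / 2) Hind ltac:(lra) Hlt ltac:(lra)) as [c [_ Hc]].
    + rewrite Hind0, Hindb; lra.
    + exact (Hskip c Hc).
  - assert (Hlt : b < b0) by (destruct (Req_dec b b0) as [->|]; [contradiction | lra]).
    destruct (cont01_ivt ind b b0 (1 / 2) Hind ltac:(lra) Hlt ltac:(lra)) as [c [_ Hc]].
    + rewrite Hind0, Hindb; lra.
    + exact (Hskip c Hc).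
Qed.

Definition flat_between (F : R -> R) : Prop :=
  forall a c b, 0 <= a -> a < c -> c < b -> b <= 1 -> F a = F b -> F c = F a.

Lemma no_strict_peak (F : R -> R) (a b c : R) :
  cont_on_01 F -> flat_between F -> 0 <= a -> a < b -> b < c -> c <= 1 ->
  F a < F b -> F b <= F c.
Proof.
  intros Hc Hflat Ha Hab Hbc Hcle Hup. apply Rnot_lt_le; intros Hdown.
  set (v := (Rmax (F a) (F c) + F b) / 2).
  assert (Hva : F a < v < F b) by (unfold v; pose proof (Rmax_l (F a) (F c)); pose proof (Rmax_lub_lt (F a) (F c) (F b) Hup Hdown); lra).
  assert (Hvc : F c < v < F b) by (unfold v; pose proof (Rmax_r (F a) (F c)); pose proof (Rmax_lub_lt (F a) (F c) (F b) Hup Hdown); lra).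
  destruct (cont01_ivt F a b v Hc Ha Hab ltac:(lra)) as [c1 [Hc1ab Hc1]]; [nra|].
  destruct (cont01_ivt F b c v Hc ltac:(lra) Hbc Hcle) as [c2 [Hc2bc Hc2]]; [nra|].
  assert (Hmid : F b = F c1) by (apply (Hflat c1 b c2); lra).
  lra.
Qed.

Lemma flat_between_monotone (F : R -> R) :
  cont_on_01 F -> flat_between F -> F 0 < F 1 ->
  forall b1 b2, 0 <= b1 -> b1 <= b2 -> b2 <= 1 -> F b1 <= F b2.
Proof.
  intros Hc Hflat H01 b1 b2 H1 H12 H2. apply Rnot_lt_le; intros Hdec.
  assert (Hlt12 : b1 < b2) by (destruct (Req_dec b1 b2) as [->|]; lra).
  destruct (Rle_lt_dec (F b1) (F 1)) as [Hb1_1|H1_b1].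
  - (* b2 would be a strict interior minimum on [b1, 1] *)
    assert (Hb2 : b2 < 1) by (destruct (Req_dec b2 1) as [->|]; lra).
    assert (Hnopeak : - F b2 <= - F 1).
    { apply (no_strict_peak (fun b => - F b) b1 b2 1); try lra.
      - apply cont01_opp, Hc.
      - intros a c b Ha Hac Hcb Hb Heq.
        rewrite (Hflat a c b Ha Hac Hcb Hb ltac:(lra)). reflexivity. }
    lra.
  - (* b1 would be a strict interior maximum on [0, 1] *)
    assert (Hb1 : 0 < b1) by (destruct (Req_dec b1 0) as [->|]; lra).
    pose proof (no_strict_peak F 0 b1 1 Hc Hflat ltac:(lra) Hb1 ltac:(lra) ltac:(lra) ltac:(lra)).
    lra.
Qed.

(* A strict minimizer of a continuous function on the compact [0,1] is well
   separated: away from it by eps, the function exceeds its minimum by some m > 0.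
   m is the minimum of the positive continuous function max (h - h t0) (eps - |. - t0|). *)
Lemma well_separated_min (h : R -> R) (t0 eps : R) :
  cont_on_01 h -> 0 <= t0 <= 1 -> (forall u, 0 <= u <= 1 -> u <> t0 -> h t0 < h u) -> 0 < eps ->
  exists m, 0 < m /\ forall u, 0 <= u <= 1 -> eps <= Rabs (u - t0) -> h t0 + m <= h u.
Proof.
  intros Hc Ht0 Hstrict Heps.
  set (psi := fun u => Rmax (h u - h t0) (eps - Rabs (u - t0))).
  assert (Hpsi : cont_on_01 psi).
  { apply cont01_max; apply cont01_minus.
    - exact Hc.
    - apply cont01_const.
    - apply cont01_const.
    - apply cont01_abs, cont01_minus; [apply cont01_id | apply cont01_const]. }
  destruct (cont01_min_attained psi Hpsi) as [u0 [Hu0 Hmin]].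
  exists (psi u0); split.
  - unfold psi. pose proof (Rmax_l (h u0 - h t0) (eps - Rabs (u0 - t0))) as Hl.
    pose proof (Rmax_r (h u0 - h t0) (eps - Rabs (u0 - t0))) as Hr.
    destruct (Req_dec u0 t0) as [->|Hne].
    + rewrite (Rminus_diag t0), Rabs_R0 in *. lra.
    + specialize (Hstrict u0 Hu0 Hne). lra.
  - intros u Hu Hfar. specialize (Hmin u Hu). unfold psi at 2 in Hmin.
    rewrite Rmax_left in Hmin; [lra|].
    destruct (Req_dec u t0) as [->|Hne].
    + rewrite (Rminus_diag t0), Rabs_R0 in Hfar. lra.
    + specialize (Hstrict u Hu Hne). lra.
Qed.

Lemma argmin_stable (h h' : R -> R) (t0 t1 eps m : R) :
  (forall u, 0 <= u <= 1 -> eps <= Rabs (u - t0) -> h t0 + m <= h u) ->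
  0 <= t0 <= 1 -> 0 <= t1 <= 1 -> (forall u, 0 <= u <= 1 -> h' t1 <= h' u) ->
  (forall u, 0 <= u <= 1 -> 2 * Rabs (h' u - h u) < m) -> Rabs (t1 - t0) < eps.
Proof.
  intros Hsep Ht0 Ht1 Hmin Hclose. apply Rnot_le_lt; intros Hfar.
  specialize (Hsep t1 Ht1 Hfar). specialize (Hmin t0 Ht0).
  pose proof (Hclose t0 Ht0) as C0. pose proof (Hclose t1 Ht1) as C1.
  pose proof (Rle_abs (h' t0 - h t0)). pose proof (Rle_abs (- (h' t1 - h t1))).
  rewrite Rabs_Ropp in *. lra.
Qed.
Lemma interior_min_deriv_zero (g : R -> R) (t l : R) :
  0 < t < 1 -> (forall u, 0 <= u <= 1 -> g t <= g u) -> derivable_pt_lim g t l -> l = 0.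
Proof.
  intros Ht Hmin Hder.
  exact (deriv_minimum g 0 1 t (exist _ l Hder) (proj1 Ht) (proj2 Ht)
           (fun u H0 H1 => Hmin u (conj (Rlt_le _ _ H0) (Rlt_le _ _ H1)))).
Qed.

Lemma deriv_linear_approx (d : R -> R) (t c : R) :
  derivable_pt_lim d t c -> d t = 0 -> forall eps, 0 < eps ->
  exists rho, 0 < rho /\ forall u, Rabs (u - t) < rho -> Rabs (d u - c * (u - t)) <= eps * Rabs (u - t).
Proof.
  intros Hd Hzero eps Heps. destruct (Hd eps Heps) as [[rho Hrho] Hquot].
  exists rho; split; [exact Hrho|]. intros u Hu.
  destruct (Req_dec u t) as [->|Hne].
  - rewrite Hzero, Rminus_diag, Rmult_0_r, Rminus_0_r, Rabs_R0. lra.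
  - specialize (Hquot (u - t) ltac:(lra) Hu).
    replace (t + (u - t)) with u in Hquot by ring. rewrite Hzero in Hquot.
    replace (d u - c * (u - t)) with ((u - t) * ((d u - 0) / (u - t) - c)) by (field; lra).
    rewrite Rabs_mult, Rmult_comm. apply Rmult_le_compat_r; [apply Rabs_pos | lra].
Qed.

Lemma deriv_zero_linear_bound (d : R -> R) (t c : R) :
  derivable_pt_lim d t c -> d t = 0 ->
  exists L rho, 0 < L /\ 0 < rho /\ forall u, Rabs (u - t) < rho -> Rabs (d u) <= L * Rabs (u - t).
Proof.
  intros Hd Hzero. destruct (deriv_linear_approx d t c Hd Hzero 1 ltac:(lra)) as [rho [Hrho Happrox]].
  exists (Rabs c + 1), rho; split; [pose proof (Rabs_pos c); lra|]. split; [exact Hrho|]. intros u Hu.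
  specialize (Happrox u Hu).
  replace (d u) with ((d u - c * (u - t)) + c * (u - t)) by ring.
  eapply Rle_trans; [apply Rabs_triang|]. rewrite Rabs_mult. lra.
Qed.

Lemma unique_min_of_derivative_sign (g G : R -> R) (t rho : R) :
  (forall u, Rabs (u - t) < rho -> derivable_pt_lim g u (G u)) ->
  (forall u, 0 < Rabs (u - t) < rho -> 0 < G u * (u - t)) ->
  forall u, Rabs (u - t) < rho -> g u <= g t -> u = t.
Proof.
  intros Hder Hsign u Hu Hle. apply Rabs_def2 in Hu.
  destruct (Rtotal_order u t) as [Hlt|[Heq|Hgt]]; [exfalso | exact Heq | exfalso].
  - destruct (MVT_cor2 g G u t Hlt) as [xi [Hmvt Hxi]].
    + intros c Hc. apply Hder. apply Rabs_def1; lra.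
    + assert (Hs : 0 < G xi * (xi - t)) by (apply Hsign; rewrite Rabs_left by lra; lra).
      assert (G xi < 0) by nra. nra.
  - destruct (MVT_cor2 g G t u Hgt) as [xi [Hmvt Hxi]].
    + intros c Hc. apply Hder. apply Rabs_def1; lra.
    + assert (Hs : 0 < G xi * (xi - t)) by (apply Hsign; rewrite Rabs_right by lra; lra).
      assert (0 < G xi) by nra. nra.
Qed.

Lemma perturbed_sign (D E c L r h : R) :
  0 < c -> h <> 0 -> Rabs (D - c * h) <= c / 2 * Rabs h -> Rabs E <= L * Rabs h ->
  Rabs r * L <= c / 4 -> 0 < (D + r * E) * h.
Proof.
  intros Hc Hh HD HE Hr.
  assert (Hh2 : 0 < h * h) by (destruct (Rlt_dec h 0); nra).
  assert (HDh : Rabs ((D - c * h) * h) <= c / 2 * (h * h)).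
  { rewrite Rabs_mult. replace (h * h) with (Rabs h * Rabs h) by (rewrite <- Rabs_mult; apply Rabs_right; lra).
    pose proof (Rabs_pos h). nra. }
  assert (HEh : Rabs (r * E * h) <= c / 4 * (h * h)).
  { rewrite !Rabs_mult. replace (h * h) with (Rabs h * Rabs h) by (rewrite <- Rabs_mult; apply Rabs_right; lra).
    pose proof (Rabs_pos h). pose proof (Rabs_pos r).
    assert (Rabs r * Rabs E <= Rabs r * (L * Rabs h)) by (apply Rmult_le_compat_l; assumption).
    nra. }
  pose proof (Rle_abs (- ((D - c * h) * h))). pose proof (Rle_abs (- (r * E * h))).
  rewrite Rabs_Ropp in *. nra.
Qed.

Lemma small_ratio (x w c L : R) :
  0 < w -> 0 < L -> Rabs x < c * w / (4 * L) -> Rabs (x / w) * L <= c / 4.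
Proof.
  intros Hw HL Hx. unfold Rdiv at 1.
  rewrite Rabs_mult, (Rabs_right (/ w)) by (left; apply Rinv_0_lt_compat; lra).
  apply Rle_trans with (c * w / (4 * L) * / w * L).
  - apply Rmult_le_compat_r; [lra|].
    apply Rmult_le_compat_r; [left; apply Rinv_0_lt_compat | ]; lra.
  - right. field. lra.
Qed.

Lemma sumR_lin (m : nat) (f g : nat -> R) (a b : R) :
  sumR m (fun x => a * f x + b * g x) = a * sumR m f + b * sumR m g.
Proof. induction m as [|m IH]; simpl; [ring | rewrite IH; ring]. Qed.

Lemma sumR_cont01 (m : nat) (F : nat -> R -> R) :
  (forall x, (x < m)%nat -> cont_on_01 (F x)) -> cont_on_01 (fun t => sumR m (fun x => F x t)).
Proof.
  induction m as [|m IH]; intros HF; simpl.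
  - apply cont01_const.
  - apply cont01_plus; [apply IH; intros x Hx | ]; apply HF; lia.
Qed.

Lemma KLD_mix (n : nat) (k : nat -> R -> R) (t b : R) (s st : nat -> R) :
  KLD n k t (mix b s st) = b * KLD n k t s + (1 - b) * KLD n k t st.
Proof.
  unfold KLD, mix. rewrite <- sumR_lin. f_equal.
  apply functional_extensionality; intros x. ring.
Qed.

Lemma DeltaX_mix (n : nat) (b : R) (s st : nat -> R) :
  0 <= b <= 1 -> DeltaX n s -> DeltaX n st -> DeltaX n (mix b s st).
Proof.
  intros Hb [Hs_pos Hs_sum] [Hst_pos Hst_sum]. split.
  - intros x Hx. specialize (Hs_pos x Hx). specialize (Hst_pos x Hx). unfold mix. nra.
  - unfold mix. rewrite sumR_lin, Hs_sum, Hst_sum. ring.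
Qed.

Lemma mix_0 (s st : nat -> R) : mix 0 s st = st.
Proof. apply functional_extensionality; intros x; unfold mix; ring. Qed.

Lemma mix_1 (s st : nat -> R) : mix 1 s st = s.
Proof. apply functional_extensionality; intros x; unfold mix; ring. Qed.

Lemma mix_of_mixes (s st : nat -> R) (a b c : R) :
  a < b -> mix c s st = mix ((b - c) / (b - a)) (mix a s st) (mix b s st).
Proof. intros Hab. apply functional_extensionality; intros x. unfold mix. field. lra. Qed.

Section KLDMinimizer.

Variables (n : nat) (k : nat -> R -> R) (th : (nat -> R) -> R).
Hypothesis HA5 : Assumption5 n k th.
Hypothesis Hcont : forall x, (x < n)%nat -> cont_on_01 (k x).

Lemma th_range (r : nat -> R) : DeltaX n r -> 0 <= th r <= 1.
Proof. intros Hr. exact (proj1 (proj1 (HA5 r Hr))). Qed.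

Lemma th_strict_min (r : nat -> R) (t : R) :
  DeltaX n r -> 0 <= t <= 1 -> t <> th r -> KLD n k (th r) r < KLD n k t r.
Proof. intros Hr. exact (proj2 (proj1 (HA5 r Hr)) t). Qed.

Lemma th_min (r : nat -> R) (t : R) : DeltaX n r -> 0 <= t <= 1 -> KLD n k (th r) r <= KLD n k t r.
Proof.
  intros Hr Ht. destruct (Req_dec t (th r)) as [->|Hne]; [lra|].
  left; exact (th_strict_min r t Hr Ht Hne).
Qed.

Lemma th_mix_common (r1 r2 : nat -> R) (a : R) :
  DeltaX n r1 -> DeltaX n r2 -> 0 <= a <= 1 -> th r1 = th r2 -> th (mix a r1 r2) = th r1.
Proof.
  intros H1 H2 Ha Heq.
  assert (Hr : DeltaX n (mix a r1 r2)) by (apply DeltaX_mix; assumption).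
  set (t := th (mix a r1 r2)).
  apply NNPP; intros Hne.
  pose proof (th_min (mix a r1 r2) (th r1) Hr (th_range r1 H1)) as Hmin.
  pose proof (th_strict_min r1 t H1 (th_range _ Hr) Hne) as S1.
  rewrite Heq in Hne, S1. pose proof (th_strict_min r2 t H2 (th_range _ Hr) Hne) as S2.
  fold t in Hmin. rewrite !KLD_mix, Heq in Hmin.
  destruct (Req_dec a 0) as [->|Ha0]; [lra | nra].
Qed.

Lemma th_mix_flat (s st : nat -> R) :
  DeltaX n s -> DeltaX n st -> flat_between (fun b => th (mix b s st)).
Proof.
  intros Hs Hst a c b Ha Hac Hcb Hb Heq. simpl.
  rewrite (mix_of_mixes s st a b c) by lra.
  apply th_mix_common; [apply DeltaX_mix; auto; lra | apply DeltaX_mix; auto; lra | | exact Heq].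
  split; apply (Rmult_le_reg_r (b - a)); unfold Rdiv; try lra;
    rewrite Rmult_assoc, Rinv_l by lra; lra.
Qed.

Lemma KLD_cont01 (r : nat -> R) : cont_on_01 (fun t => KLD n k t r).
Proof.
  apply (sumR_cont01 n (fun x t => r x * k x t)). intros x Hx.
  apply cont01_scal, Hcont, Hx.
Qed.

(* Continuity of beta |-> theta(sigma_beta) (Berge's maximum theorem): K(., sigma_beta)
   moves uniformly by O(|beta - beta0|), while the minimum of K(., sigma_beta0) is
   well separated. *)
Lemma th_mix_cont01 (s st : nat -> R) :
  DeltaX n s -> DeltaX n st -> cont_on_01 (fun b => th (mix b s st)).
Proof.
  intros Hs Hst b0 Hb0 eps Heps.
  assert (Hm0 : DeltaX n (mix b0 s st)) by (apply DeltaX_mix; assumption).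
  destruct (well_separated_min (fun t => KLD n k t (mix b0 s st)) (th (mix b0 s st)) eps
              (KLD_cont01 _) (th_range _ Hm0)
              (fun u Hu Hne => th_strict_min _ u Hm0 Hu Hne) Heps) as [m [Hm_pos Hsep]].
  destruct (cont01_bounded (fun t => KLD n k t s - KLD n k t st)) as [M [HM HMbound]].
  { apply cont01_minus; apply KLD_cont01. }
  exists (m / (2 * M + 1)); split; [apply Rdiv_lt_0_compat; lra|].
  intros b Hb Hbb0.
  assert (Hmb : DeltaX n (mix b s st)) by (apply DeltaX_mix; assumption).
  apply (argmin_stable (fun t => KLD n k t (mix b0 s st)) (fun t => KLD n k t (mix b s st))
           _ _ eps m Hsep (th_range _ Hm0) (th_range _ Hmb) (fun u Hu => th_min _ u Hmb Hu)).
  intros u Hu.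
  replace (KLD n k u (mix b s st) - KLD n k u (mix b0 s st))
    with ((b - b0) * (KLD n k u s - KLD n k u st)) by (rewrite !KLD_mix; ring).
  rewrite Rabs_mult.
  assert (Hstep : Rabs (b - b0) * Rabs (KLD n k u s - KLD n k u st) <= m / (2 * M + 1) * M).
  { apply Rmult_le_compat; [apply Rabs_pos | apply Rabs_pos | lra | exact (HMbound u Hu)]. }
  assert (Hsmall : 2 * (m / (2 * M + 1) * M) < m).
  { apply (Rmult_lt_reg_r (2 * M + 1)); [lra|]. field_simplify; [nra | lra]. }
  lra.
Qed.

(* At an interior minimizer t = th r, Assumption 5 (ii) together with Fermat's rule
   gives a derivative d of K(., r) near t with d t = 0 and d'(t) > 0. *)
Lemma th_interior_data (r : nat -> R) (t : R) :
  DeltaX n r -> th r = t -> 0 < t < 1 ->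
  exists c d del, 0 < c /\ 0 < del /\
    (forall u, Rabs (u - t) < del -> derivable_pt_lim (fun v => KLD n k v r) u (d u)) /\
    derivable_pt_lim d t c /\ d t = 0.
Proof.
  intros Hr <- Hint. destruct (proj2 (HA5 r Hr) Hint) as [c [Hc [d [del [Hdel [Hder Hder2]]]]]].
  exists c, d, del. repeat split; try assumption.
  apply (interior_min_deriv_zero (fun v => KLD n k v r) (th r) (d (th r)) Hint).
  - intros u Hu. exact (th_min r u Hr Hu).
  - apply Hder. rewrite Rminus_diag, Rabs_R0. exact Hdel.
Qed.

(* Since K_b = K_b0 + (b - b0) / (b2 - b1) (K_b2 - K_b1), derivatives of K_b0, K_b1,
   K_b2 at u give one of K_b. *)
Lemma KLD_mix_derivative (s st : nat -> R) (b b0 b1 b2 u l0 l1 l2 : R) :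
  b1 < b2 ->
  derivable_pt_lim (fun v => KLD n k v (mix b0 s st)) u l0 ->
  derivable_pt_lim (fun v => KLD n k v (mix b1 s st)) u l1 ->
  derivable_pt_lim (fun v => KLD n k v (mix b2 s st)) u l2 ->
  derivable_pt_lim (fun v => KLD n k v (mix b s st)) u (l0 + (b - b0) / (b2 - b1) * (l2 - l1)).
Proof.
  intros H12 D0 D1 D2.
  apply (derivable_pt_lim_ext (fun v => KLD n k v (mix b0 s st) +
           (b - b0) / (b2 - b1) * (KLD n k v (mix b2 s st) - KLD n k v (mix b1 s st)))).
  { intros v. rewrite !KLD_mix. field. lra. }
  apply (derivable_pt_lim_plus _ (mult_real_fct _ (fun v => KLD n k v (mix b2 s st) - KLD n k v (mix b1 s st))));
    [exact D0|].
  apply derivable_pt_lim_scal, derivable_pt_lim_minus; assumption.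
Qed.

(* If sigma_b0, sigma_b1, sigma_b2 (b1 < b2) share the interior minimizer t, then for b
   near b0 the derivative of K(., sigma_b) has the sign of u - t near t: it is the
   derivative at b0 (slope c0 > 0 at t) plus a small multiple of an O(u - t) term. *)
Lemma th_mix_derivative_sign (s st : nat -> R) (b0 b1 b2 t : R) :
  DeltaX n s -> DeltaX n st -> 0 <= b0 <= 1 -> 0 <= b1 -> b1 < b2 -> b2 <= 1 -> 0 < t < 1 ->
  th (mix b0 s st) = t -> th (mix b1 s st) = t -> th (mix b2 s st) = t ->
  exists rho eta, 0 < rho /\ 0 < eta /\ forall b, Rabs (b - b0) < eta ->
    exists G, (forall u, Rabs (u - t) < rho -> derivable_pt_lim (fun v => KLD n k v (mix b s st)) u (G u)) /\
              (forall u, 0 < Rabs (u - t) < rho -> 0 < G u * (u - t)).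
Proof.
  intros Hs Hst Hb0 Hb1 H12 Hb2 Ht E0 E1 E2.
  assert (Hm : forall b, 0 <= b <= 1 -> DeltaX n (mix b s st)) by (intros; apply DeltaX_mix; assumption).
  destruct (th_interior_data _ t (Hm b0 Hb0) E0 Ht) as [c0 [d0 [del0 [Hc0 [Hdel0 [D0 [DD0 Z0]]]]]]].
  destruct (th_interior_data _ t (Hm b1 ltac:(lra)) E1 Ht) as [c1 [d1 [del1 [_ [Hdel1 [D1 [DD1 Z1]]]]]]].
  destruct (th_interior_data _ t (Hm b2 ltac:(lra)) E2 Ht) as [c2 [d2 [del2 [_ [Hdel2 [D2 [DD2 Z2]]]]]]].
  destruct (deriv_linear_approx d0 t c0 DD0 Z0 (c0 / 2) ltac:(lra)) as [rho0 [Hrho0 Approx0]].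
  destruct (deriv_zero_linear_bound (fun u => d2 u - d1 u) t (c2 - c1)
              (derivable_pt_lim_minus d2 d1 t c2 c1 DD2 DD1) ltac:(cbv beta; rewrite Z1, Z2; ring))
    as [L [rhoE [HL [HrhoE BoundE]]]].
  set (rho := Rmin (Rmin del0 rho0) (Rmin (Rmin del1 del2) rhoE)).
  assert (Hwin : forall u, Rabs (u - t) < rho ->
    Rabs (u - t) < del0 /\ Rabs (u - t) < rho0 /\ Rabs (u - t) < del1 /\
    Rabs (u - t) < del2 /\ Rabs (u - t) < rhoE).
  { intros u Hu. unfold rho in Hu.
    destruct (Rmin_Rgt_l _ _ _ Hu) as [Hu0 HuE]. destruct (Rmin_Rgt_l _ _ _ Hu0) as [Hd0 Hr0].
    destruct (Rmin_Rgt_l _ _ _ HuE) as [Hd12 HrE]. destruct (Rmin_Rgt_l _ _ _ Hd12) as [Hd1 Hd2].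
    repeat split; assumption. }
  exists rho, (c0 * (b2 - b1) / (4 * L)). split; [unfold rho; repeat apply Rmin_glb_lt; assumption|].
  split; [apply Rdiv_lt_0_compat; [apply Rmult_lt_0_compat|]; lra|].
  intros b Hbb0. set (r := (b - b0) / (b2 - b1)).
  exists (fun u => d0 u + r * (d2 u - d1 u)). split.
  - intros u Hu. destruct (Hwin u Hu) as [W0 [_ [W1 [W2 _]]]].
    exact (KLD_mix_derivative s st b b0 b1 b2 u _ _ _ H12 (D0 u W0) (D1 u W1) (D2 u W2)).
  - intros u [Hpos Hu]. destruct (Hwin u Hu) as [_ [R0 [_ [_ RE]]]].
    apply (perturbed_sign _ _ c0 L r); [exact Hc0 | | exact (Approx0 u R0) | exact (BoundE u RE) |].
    + intros Hz. rewrite Hz, Rabs_R0 in Hpos. lra.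
    + apply small_ratio; lra.
Qed.

(* If two distinct points of the segment share an interior minimizer t, the level set
   {b | theta(sigma_b) = t} is open (second-order condition) and closed (continuity). *)
Lemma th_mix_level_locally_const (s st : nat -> R) (b1 b2 t : R) :
  DeltaX n s -> DeltaX n st -> 0 <= b1 -> b1 < b2 -> b2 <= 1 -> 0 < t < 1 ->
  th (mix b1 s st) = t -> th (mix b2 s st) = t ->
  locally_const01 (fun b => th (mix b s st) = t).
Proof.
  intros Hs Hst Hb1 H12 Hb2 Ht E1 E2 b0 Hb0.
  pose proof (th_mix_cont01 s st Hs Hst b0 Hb0) as Hcont0.
  destruct (Req_dec (th (mix b0 s st)) t) as [E0|Hne].
  - destruct (th_mix_derivative_sign s st b0 b1 b2 t Hs Hst Hb0 Hb1 H12 Hb2 Ht E0 E1 E2)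
      as [rho [eta [Hrho [Heta Hsign]]]].
    destruct (Hcont0 rho Hrho) as [eta' [Heta' Hclose]].
    exists (Rmin eta eta'); split; [apply Rmin_glb_lt; assumption|].
    intros b Hb Hbb0. destruct (Rmin_Rgt_l _ _ _ Hbb0) as [Hnear Hnear'].
    split; intros _; [exact E0|].
    destruct (Hsign b Hnear) as [G [Hder HG]].
    assert (Hmb : DeltaX n (mix b s st)) by (apply DeltaX_mix; assumption).
    apply (unique_min_of_derivative_sign (fun v => KLD n k v (mix b s st)) G t rho Hder HG).
    + rewrite <- E0. exact (Hclose b Hb Hnear').
    + apply th_min; [exact Hmb | lra].
  - assert (Hgap : 0 < Rabs (th (mix b0 s st) - t)) by (apply Rabs_pos_lt; lra).
    destruct (Hcont0 _ Hgap) as [eta [Heta Hclose]].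
    exists eta; split; [exact Heta|]. intros b Hb Hbb0.
    split; intros Eb; [exfalso | contradiction].
    specialize (Hclose b Hb Hbb0). simpl in Hclose. rewrite Eb in Hclose.
    rewrite <- Rabs_Ropp in Hclose. replace (- (t - th (mix b0 s st))) with (th (mix b0 s st) - t) in Hclose by ring.
    lra.
Qed.

End KLDMinimizer.

Theorem proposition5 (n : nat) (k : nat -> R -> R) (th : (nat -> R) -> R)
  (Hcont : forall x, (x < n)%nat -> cont_on_01 (k x))
  (HA5 : Assumption5 n k th)
  (sigma sigmat : nat -> R) (Hs : DeltaX n sigma) (Hst : DeltaX n sigmat) :
  (th sigma = th sigmat ->
     forall beta, 0 <= beta <= 1 -> th (mix beta sigma sigmat) = th sigma) /\
  (th sigmat < th sigma ->
     forall b1 b2, 0 <= b1 -> b1 <= b2 -> b2 <= 1 ->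
       th (mix b1 sigma sigmat) <= th (mix b2 sigma sigmat)) /\
  (th sigmat < th sigma ->
     forall b1 b2, 0 <= b1 -> b1 < b2 -> b2 <= 1 ->
       0 < th (mix b1 sigma sigmat) < 1 ->
       th (mix b1 sigma sigmat) < th (mix b2 sigma sigmat)).
Proof.
  set (f := fun b => th (mix b sigma sigmat)).
  assert (Hf_cont : cont_on_01 f) by exact (th_mix_cont01 n k th HA5 Hcont sigma sigmat Hs Hst).
  assert (Hf_flat : flat_between f) by exact (th_mix_flat n k th HA5 sigma sigmat Hs Hst).
  assert (Hf_ends : f 0 = th sigmat /\ f 1 = th sigma) by (unfold f; rewrite mix_0, mix_1; split; reflexivity).
  assert (Hmono : th sigmat < th sigma ->
            forall b1 b2, 0 <= b1 -> b1 <= b2 -> b2 <= 1 -> f b1 <= f b2).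
  { intros Hlt. apply (flat_between_monotone f Hf_cont Hf_flat). lra. }
  split; [|split].
  - intros Heq beta Hbeta. exact (th_mix_common n k th HA5 sigma sigmat beta Hs Hst Hbeta Heq).
  - exact Hmono.
  - intros Hlt b1 b2 Hb1 H12 Hb2 Hint.
    destruct (Hmono Hlt b1 b2 Hb1 (Rlt_le _ _ H12) Hb2) as [|Heq]; [assumption | exfalso].
    (* otherwise f is constant on [0,1], by connectedness of its level set *)
    pose proof (th_mix_level_locally_const n k th HA5 Hcont sigma sigmat b1 b2 (f b1)
                  Hs Hst Hb1 H12 Hb2 Hint eq_refl (eq_sym Heq)) as Hloc.
    pose proof (locally_const01_everywhere _ b1 Hloc ltac:(lra) eq_refl) as Hconst.
    assert (H0 : f 0 = f b1) by exact (Hconst 0 ltac:(lra)).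
    assert (H1 : f 1 = f b1) by exact (Hconst 1 ltac:(lra)).
    lra.
Qed.
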